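(* Let $\ell$ be a prime, $\nu\ge1$, and $R$ a $\mathbb{Z}/\ell^\nu$-algebra. Let $L'$ be the free $R$-module with basis $\alpha_0,\alpha_1,\dots,\alpha_{\ell-1}$ and $L\subseteq L'$ the submodule spanned by $\alpha_1,\dots,\alpha_{\ell-1}$. For $k\ge0$ define $b_k:L'\to L'$ by $b_k(\alpha_i)=(k\ell+i)\alpha_i+(k\ell+i+1)\alpha_{i+1}$ for $0\le i\le \ell-2$ and $b_k(\alpha_{\ell-1})=(k\ell+\ell-1)\alpha_{\ell-1}$ (so $b_k(L)\subseteq L$). Then for every $k\ge0$ the natural maps $L\to L[1/b_k]\to L'[1/b_k]$ are isomorphisms, where $M[1/b_k]$ denotes the colimit of $M\xrightarrow{b_k}M\xrightarrow{b_k}M\to\cdots$. *)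

From HB Require Import structures.
From mathcomp Require Import all_boot all_order all_algebra.
Set Implicit Arguments. Unset Strict Implicit. Unset Printing Implicit Defensive.
Import Order.TTheory GRing.Theory Num.Theory.
Local Open Scope ring_scope.

(* L' = free R-module with basis alpha_0..alpha_{l-1}, represented as
   coordinate vectors {ffun 'I_l -> R}; v i = coefficient of alpha_i. *)

Definition coord (R : pzRingType) (l : nat) (v : {ffun 'I_l -> R}) (n : nat) : R :=
  match insub n with Some i => v i | None => 0 end.

(* b_k(alpha_i) = (k l + i) alpha_i + (k l + i + 1) alpha_{i+1}  (i <= l-2),
   b_k(alpha_{l-1}) = (k l + l - 1) alpha_{l-1}.
   Hence the coefficient of alpha_j in b_k(v) is
   (k l + j) * (v_j + v_{j-1})  (with v_{-1} := 0). *)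
Definition bk (R : pzRingType) (l k : nat) (v : {ffun 'I_l -> R}) : {ffun 'I_l -> R} :=
  [ffun j : 'I_l => (k * l + j)%:R *
     (v j + (if (j : nat) is i.+1 then coord v i else 0))].

(* L = span of alpha_1..alpha_{l-1}: vectors with zero alpha_0-coefficient *)
Definition inL (R : pzRingType) (l : nat) (v : {ffun 'I_l -> R}) : Prop :=
  forall j : 'I_l, (j : nat) = 0%N -> v j = 0.

(* Colimit M[1/b] of M -b-> M -b-> ... (M a b-stable subset), realized as
   the set of pairs (m, n) ("m at stage n") with m in M, modulo the
   equivalence (m,n) ~ (m',n') iff b^(t+n') m = b^(t+n) m' for some t. *)
Definition colim_rel (V : Type) (b : V -> V) (x y : V * nat) : Prop :=
  exists t : nat, iter (t + y.2) b x.1 = iter (t + x.2) b y.1.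

(* The natural map M -> M[1/b], m |-> [(m,0)], is bijective. *)
Definition canon_map_bij (V : Type) (M : V -> Prop) (b : V -> V) : Prop :=
  (forall m m', M m -> M m' -> colim_rel b (m, 0%N) (m', 0%N) -> m = m') /\
  (forall m n, M m -> exists m', M m' /\ colim_rel b (m', 0%N) (m, n)).

(* The map M[1/b] -> N[1/b] induced by the inclusion M ⊆ N,
   [(m,n)] |-> [(m,n)], is bijective (the colimit relations of M and N
   are computed with the same b, in M resp. N). *)
Definition incl_map_bij (V : Type) (M N : V -> Prop) (b : V -> V) : Prop :=
  (forall m n m' n', M m -> M m' ->
      colim_rel b (m, n) (m', n') -> colim_rel b (m, n) (m', n')) /\
  (forall v n, N v -> exists m n', M m /\ colim_rel b (m, n') (v, n)).

(* On L the map b_k is lower bidiagonal with diagonal entries k l + j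
   (1 <= j <= l-1), which are prime to l and hence units of R: so b_k is
   bijective on L and L -> L[1/b_k] is an isomorphism.  On L' the
   alpha_0-coordinate is multiplied by k l at each step, so b_k^nu maps L'
   into L, which makes L[1/b_k] -> L'[1/b_k] an isomorphism. *)
From Pilot Require Import Defs.
From HB Require Import structures.
From mathcomp Require Import all_boot all_order all_algebra.
Set Implicit Arguments. Unset Strict Implicit. Unset Printing Implicit Defensive.
Import GRing.Theory.
Local Open Scope ring_scope.

Section ColimitOfBijection.
Variables (V : Type) (M : V -> Prop) (b : V -> V).

Lemma iter_stable : (forall v, M v -> M (b v)) ->
  forall n v, M v -> M (iter n b v).
Proof. by move=> bM; elim=> //= n IH v /IH /bM. Qed.

Lemma iter_inj_in : (forall v, M v -> M (b v)) ->
    (forall v v', M v -> M v' -> b v = b v' -> v = v') ->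
  forall n v v', M v -> M v' -> iter n b v = iter n b v' -> v = v'.
Proof.
move=> bM b_inj; elim=> //= n IH v v' Mv Mv' eq_iter.
have := b_inj _ _ (iter_stable bM n Mv) (iter_stable bM n Mv') eq_iter.
exact: IH.
Qed.

Lemma iter_surj_in : (forall w, M w -> exists v, M v /\ b v = w) ->
  forall n w, M w -> exists v, M v /\ iter n b v = w.
Proof.
move=> b_surj; elim=> [|n IH] w Mw; first by exists w.
have [u [Mu <-]] := IH w Mw; have [v [Mv <-]] := b_surj u Mu.
by exists v; rewrite iterSr.
Qed.

Lemma canon_map_bij_of_bij : (forall v, M v -> M (b v)) ->
    (forall v v', M v -> M v' -> b v = b v' -> v = v') ->
    (forall w, M w -> exists v, M v /\ b v = w) ->
  canon_map_bij M b.
Proof.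
move=> bM b_inj b_surj; split.
  move=> m m' Mm Mm' [t /=]; rewrite !addn0; exact: iter_inj_in.
move=> m n Mm; have [v [Mv eq_v]] := iter_surj_in b_surj n Mm.
by exists v; split => //; exists 0%N; rewrite /= add0n eq_v.
Qed.

End ColimitOfBijection.

Lemma incl_map_bij_of_iter_sub (V : Type) (M N : V -> Prop) (b : V -> V)
    (n : nat) :
  (forall v, N v -> M (iter n b v)) -> incl_map_bij M N b.
Proof.
move=> iterNM; split=> // v m Nv.
exists (iter n b v), (m + n)%N; split; first exact: iterNM.
by exists 0%N; rewrite /= !add0n iterD.
Qed.

Lemma natr_egcdn_inv (R : pzRingType) (m n : nat) :
  (0 < m)%N -> coprime m n -> n%:R = 0 :> R -> (egcdn m n).1%:R * m%:R = 1 :> R.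
Proof.
move=> m_gt0 /eqP cop_mn n0; case: (egcdnP n m_gt0) => km kn /= def_km _.
by rewrite -natrM def_km cop_mn natrD natrM n0 mulr0 add0r.
Qed.

Section BkOnL.
Variables (l nu : nat) (R : pzRingType) (k : nat).
Hypotheses (l_prime : prime l) (char_R : (l ^ nu)%:R = 0 :> R).
Implicit Types v w : {ffun 'I_l -> R}.

Lemma coord_ord v (j : 'I_l) : Defs.coord v j = v j.
Proof. by rewrite /Defs.coord valK. Qed.

Definition bk_diag_inv (j : nat) : nat := (egcdn (k * l + j) (l ^ nu)).1.

Lemma bk_diag_invK (j : nat) : (0 < j < l)%N ->
  (bk_diag_inv j)%:R * (k * l + j)%:R = 1 :> R.
Proof.
case/andP=> j_gt0 j_lt_l; apply: natr_egcdn_inv char_R.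
  by rewrite addn_gt0 j_gt0 orbT.
rewrite coprime_sym coprimeXl // prime_coprime //.
by rewrite dvdn_addr ?dvdn_mull // gtnNdvd.
Qed.

Lemma inL_bk v : inL v -> inL (bk k v).
Proof. by move=> Lv j j0; rewrite ffunE Lv // j0 addr0 mulr0. Qed.

Lemma bk_inj_L v v' : inL v -> inL v' -> bk k v = bk k v' -> v = v'.
Proof.
move=> Lv Lv' eq_bk.
suff eq_coord i : Defs.coord v i = Defs.coord v' i.
  by apply/ffunP => j; rewrite -!coord_ord eq_coord.
elim: i => [|i IH]; rewrite /Defs.coord; case: insubP => // j j_lt_l val_j.
  by rewrite Lv ?Lv'.
have := congr1 (fun f : {ffun 'I_l -> R} => f j) eq_bk.
rewrite !ffunE val_j /= IH => /(congr1 (fun x => (bk_diag_inv i.+1)%:R * x)).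
by rewrite !mulrA bk_diag_invK ?j_lt_l // !mul1r => /addIr.
Qed.

(* Solves (k l + j) (v_j + v_{j-1}) = w_j by back substitution from v_0 = 0. *)
Fixpoint bk_preimage (w : {ffun 'I_l -> R}) (j : nat) : R :=
  if j is i.+1 then (bk_diag_inv j)%:R * Defs.coord w j - bk_preimage w i else 0.

Lemma bk_surj_L w : inL w -> exists v, inL v /\ bk k v = w.
Proof.
move=> Lw; pose v := [ffun j : 'I_l => bk_preimage w j].
exists v; split; first by move=> j j0; rewrite ffunE j0.
apply/ffunP => j; rewrite !ffunE.
case def_j: (nat_of_ord j) => [|i]; first by rewrite addr0 Lw // mulr0.
have i_lt_l : (i < l)%N by apply: ltnW; rewrite -def_j.
have coord_v : Defs.coord v i = bk_preimage w i.
  by rewrite /Defs.coord (insubT (fun i => i < l)%N i_lt_l) ffunE.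
rewrite coord_v /= subrK -def_j coord_ord mulrA -natrM mulnC natrM.
by rewrite bk_diag_invK ?mul1r // ltn_ord andbT def_j.
Qed.

Lemma iter_bk_coord0 n v (j : 'I_l) : (j : nat) = 0%N ->
  iter n (bk k) v j = ((k * l) ^ n)%:R * v j.
Proof.
move=> j0; elim: n => [|n IH] /=; first by rewrite mul1r.
by rewrite ffunE j0 addn0 addr0 IH mulrA -natrM expnS.
Qed.

Lemma inL_iter_bk_nu v : inL (iter nu (bk k) v).
Proof.
by move=> j j0; rewrite iter_bk_coord0 // expnMn natrM char_R mulr0 mul0r.
Qed.

End BkOnL.

Theorem lemma2p3 (l nu : nat) (R : pzRingType)
    (hl : prime l) (hnu : (1 <= nu)%N) (hR : (l ^ nu)%:R = 0 :> R) (k : nat) :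
  canon_map_bij (@inL R l) (bk k) /\
  incl_map_bij (@inL R l) (fun _ => True) (bk k).
Proof.
split.
  apply: canon_map_bij_of_bij => [v | v v' | w].
  - exact: inL_bk.
  - exact: (bk_inj_L hl hR).
  - exact: (bk_surj_L k hl hR).
apply: (@incl_map_bij_of_iter_sub _ _ _ _ nu) => v _.
exact: (inL_iter_bk_nu k hR v).
Qed.
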